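(* Let $X_1,\dots,X_N$ and $\sigma_1,\dots,\sigma_N$ be as in the context, and let $\widetilde{\mathcal H}$, $M_k,A_k,D_k$ and $\eta_k$ be as defined there. Let $R$ be a positive integer, let $\varepsilon\colon\{1,\dots,R\}\to\{1,*\}$ and $\iota\colon\{1,\dots,R\}\to\{1,\dots,N\}$ with $\iota(1)=\iota(R)=k$. Let $\pi\in NC(R)$ satisfy: (i) $\pi\in NC_{\mathrm{irr}}(R)$; (ii) for every block $B=(q_1<q_2<\dots<q_r)$ of $\pi$, $\iota(q_1)=\dots=\iota(q_r)$ and $\varepsilon(q_1)\ne\varepsilon(q_2)\ne\dots\ne\varepsilon(q_r)\ne\varepsilon(q_1)$. Define $\varphi_\pi\colon\{1,\dots,R\}\to\mathcal L(\widetilde{\mathcal H})$ by: $\varphi_\pi(j)=M_{\iota(j)}^{\varepsilon(j)}$ for $j\in\{1,R\}$; for $2\le j\le R-1$ with $\varepsilon(j)=1$, $\varphi_\pi(j)=D_{\iota(j)}$ if $j$ is the least element of its block of $\pi$, $A^*_{\iota(j)}$ if $j$ is the greatest element of its block, and $M_{\iota(j)}$ otherwise; for $2\le j\le R-1$ with $\varepsilon(j)=*$, $\varphi_\pi(j)=A_{\iota(j)}$ if $j$ is the least element of its block, $D^*_{\iota(j)}$ if $j$ is the greatest element of its block, and $M^*_{\iota(j)}$ otherwise. Then $$\kappa_\pi[X_{\iota(1)}^{\varepsilon(1)},\dots,X_{\iota(R)}^{\varepsilon(R)}]=\langle\varphi_\pi(1)\cdots\varphi_\pi(R)\eta_k,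\eta_k\rangle.$$
   Context: $(\mathcal M,\tau)$ is a tracial $W^*$-probability space, $X_1,\dots,X_N\in\mathcal M$ are $*$-free (bounded) $R$-diagonal elements, and $\sigma_1,\dots,\sigma_N$ are compactly supported symmetric finite positive Borel measures on $\mathbf{R}$ such that for every $k$, every $r\ge1$ and every cyclically alternating $\varepsilon(1),\dots,\varepsilon(r)\in\{1,*\}$ (i.e. $\varepsilon(j)\ne\varepsilon(j+1)$ and $\varepsilon(r)\ne\varepsilon(1)$), the free cumulant satisfies $\kappa_r(X_k^{\varepsilon(1)},\dots,X_k^{\varepsilon(r)})=\int t^r\,d\sigma_k(t)$. Here $X^1=X$, $X^*$ is the adjoint, $\kappa_n$ are free cumulants w.r.t. $\tau$ and $\kappa_\pi$ is the multiplicative extension over the blocks of $\pi$. $NC(R)$ is the set of noncrossing partitions of $\{1,\dots,R\}$, $NC_{\mathrm{irr}}(R)$ those in which $1$ and $R$ lie in the same block. Fock model: let $\{e,f\}$ be an orthonormal basis of $\mathbf{C}^2$, $H_k^e=L^2(\sigma_k)\otimes\mathbf{C}e$, $H_k^f=L^2(\sigma_k)\otimes\mathbf{C}f$, $\mathcal H=\bigoplus_{k=1}^N(H_k^e\oplus H_k^f)$, $\widetilde{\mathcal H}=\bigoplus_{n\ge1}\mathcal H^{\otimes n}$ (no vacuum), with inner product $\langle\cdot,\cdot\rangle$. Let $\mathrm{id}_k\in L^2(\sigma_k)$ be $t\mapsto t$ and $1_k$ the constant function $1$; $m_k\colon H_k^e\to H_k^f$, $m_k(F\otimes e)=(\mathrm{id}_k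 F)\otimes f$. For $v_1,\dots,v_n\in\mathcal H$: $M_k(v_1\otimes\cdots\otimes v_n)=m_k(P_{H_k^e}v_1)\otimes v_2\otimes\cdots\otimes v_n$ (so $M_k^*(v_1\otimes\cdots\otimes v_n)=m_k^*(P_{H_k^f}v_1)\otimes v_2\otimes\cdots\otimes v_n$), $A_k^*(v_1\otimes\cdots\otimes v_n)=(\mathrm{id}_k\otimes f)\otimes v_1\otimes\cdots\otimes v_n$, $D_k^*(v_1\otimes\cdots\otimes v_n)=(\mathrm{id}_k\otimes e)\otimes v_1\otimes\cdots\otimes v_n$; their adjoints are $A_k(v_1\otimes\cdots\otimes v_n)=\langle v_1,\mathrm{id}_k\otimes f\rangle v_2\otimes\cdots\otimes v_n$, $D_k(v_1\otimes\cdots\otimes v_n)=\langle v_1,\mathrm{id}_k\otimes e\rangle v_2\otimes\cdots\otimes v_n$ for $n\ge2$, and $A_kv=D_kv=0$ for $v\in\mathcal H$. Here $P_{H}$ is orthogonal projection onto $H$. For an operator $Z$, $Z^1=Z$ and $Z^*$ is its adjoint. $\eta_k=1_k\otimes e+1_k\otimes f\in\mathcal H$. *)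

From HB Require Import structures.
From mathcomp Require Import all_boot all_order all_algebra.
From mathcomp Require Import all_classical all_reals all_analysis.
From mathcomp Require Import complex.
Set Implicit Arguments.
Unset Strict Implicit.
Unset Printing Implicit Defensive.
Import Order.TTheory GRing.Theory Num.Theory.
Local Open Scope ring_scope.

Definition cR {R : realType} (x : R) : R[i] := Complex x 0.

Section NCProb.
Variables (R : realType) (A : lalgType R[i]).

Definition is_star (st : A -> A) : Prop :=
  [/\ involutive st,
      (forall x y, st (x + y) = st x + st y),
      (forall (c : R[i]) x, st (c *: x) = c^* *: st x)
    & (forall x y, st (x * y) = st y * st x)].

Definition is_faithful_tracial_state (st : A -> A) (tau : A -> R[i]) : Prop :=
  [/\ (forall x y, tau (x + y) = tau x + tau y),
      (forall (c : R[i]) x, tau (c *: x) = c * tau x),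
      tau 1 = 1,
      (forall x, 0 <= tau (st x * x)) /\ (forall x, tau (st x * x) = 0 -> x = 0)
    & (forall x y, tau (x * y) = tau (y * x))].

(* X^1 = X (b = true), X^* (b = false) *)
Definition xpow (st : A -> A) (x : A) (b : bool) : A := if b then x else st x.

End NCProb.

(* Noncrossing partitions of 'I_n (= {1,...,n} shifted to {0,...,n-1}) *)
Definition noncrossing {n : nat} (P : {set {set 'I_n}}) : bool :=
  [forall B in P, forall B' in P, (B != B') ==>
     ~~ [exists a : 'I_n, exists b : 'I_n, exists c : 'I_n, exists d : 'I_n,
           [&& (a < b)%N, (b < c)%N, (c < d)%N, a \in B, c \in B, b \in B' & d \in B']]].

Definition is_NC {n : nat} (P : {set {set 'I_n}}) : bool :=
  finset.partition P [set: 'I_n] && noncrossing P.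

(* The restriction of a sequence to an index set, in increasing order
   (enum B lists the elements of B : {set 'I_n} increasingly). *)
Definition restr {T : Type} (x0 : T) (s : seq T) {n : nat} (B : {set 'I_n}) : seq T :=
  [seq nth x0 s (val i) | i <- enum B].

(* Free cumulants, defined by the moment-cumulant formula
     tau(a_1 ... a_n) = sum_{pi in NC(n)} kappa_pi[a_1,...,a_n],
   solved recursively for kappa_n = kappa_{1_n}.  The fuel argument
   only ensures structural recursion (blocks of pi <> 1_n are smaller). *)
Section Cumulants.
Variables (R : realType) (A : lalgType R[i]) (tau : A -> R[i]).

Fixpoint kappa_fuel (m : nat) (s : seq A) : R[i] :=
  match m with
  | 0 => 0
  | m'.+1 =>
      tau (\prod_(a <- s) a)
      - \sum_(P : {set {set 'I_(size s)}} | is_NC P && (P != [set [set: 'I_(size s)]]))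
          \prod_(B in P) kappa_fuel m' (restr 0 s B)
  end.

Definition kappa (s : seq A) : R[i] := kappa_fuel (size s) s.

Definition kappa_pi {n : nat} (P : {set {set 'I_n}}) (a : 'I_n -> A) : R[i] :=
  \prod_(B in P) kappa [seq a i | i <- enum B].

End Cumulants.

Definition cyc_alt (s : seq bool) : bool :=
  (0 < size s)%N &&
  [forall j : 'I_(size s), nth false s j != nth false s (j.+1 %% size s)].

Section FreeRdiag.
Variables (R : realType) (A : lalgType R[i]) (st : A -> A) (tau : A -> R[i]).

Definition in_star_alg (x a : A) : Prop :=
  exists ws : seq (R[i] * seq bool),
    a = \sum_(w <- ws) w.1 *: \prod_(b <- w.2) xpow st x b.

Definition star_free {N : nat} (X : 'I_N -> A) : Prop :=
  forall (m : nat) (i : 'I_m.+1 -> 'I_N) (a : 'I_m.+1 -> A),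
    (forall j : nat, (j < m)%N -> i (inord j) != i (inord j.+1)) ->
    (forall j, in_star_alg (X (i j)) (a j) /\ tau (a j) = 0) ->
    tau (\prod_(j < m.+1) a j) = 0.

Definition R_diagonal (x : A) : Prop :=
  forall s : seq bool, (0 < size s)%N -> ~~ cyc_alt s ->
    kappa tau [seq xpow st x b | b <- s] = 0.

End FreeRdiag.

Section Meas.
Variable R : realType.
Local Open Scope classical_set_scope.

Definition symmetric_measure (mu : {measure set R -> \bar R}) : Prop :=
  forall S : set R, measurable S -> mu [set - x | x in S] = mu S.

Definition compact_support (mu : {measure set R -> \bar R}) : Prop :=
  exists M : R, mu [set x | M < `|x|] = 0%E.

Definition cint (mu : {measure set R -> \bar R}) (h : R -> R[i]) : R[i] :=
  Complex (Rintegral mu setT (fun t => complex.Re (h t))) (Rintegral mu setT (fun t => complex.Im (h t))).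

Definition ipL2 (mu : {measure set R -> \bar R}) (F G : R -> R[i]) : R[i] :=
  cint mu (fun t => F t * (G t)^*).
End Meas.

(* A vector of H = (+)_k (H_k^e (+) H_k^f) is given by its components: *)
(* v k true in L^2(sigma_k) (the e-component), v k false (f-component). *)
(* An elementary tensor v_1 (x) ... (x) v_n is a seq of such vectors,   *)
(* and a vector of tilde H (algebraic span) a finite formal linear      *)
(* combination of elementary tensors of length >= 1.                    *)
Section Fock.
Variables (R : realType) (N : nat) (sigma : 'I_N -> {measure set R -> \bar R}).

Definition Hvec := 'I_N -> bool -> R -> R[i].
Definition fock := seq (R[i] * seq Hvec).

Definition ipH (v w : Hvec) : R[i] :=
  \sum_(k < N) \sum_(c : bool) ipL2 (sigma k) (v k c) (w k c).

Definition ipT (u w : seq Hvec) : R[i] :=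
  if size u == size w then \prod_(p <- zip u w) ipH p.1 p.2 else 0.

Definition ipF (x y : fock) : R[i] :=
  \sum_(p <- x) \sum_(q <- y) p.1 * (q.1)^* * ipT p.2 q.2.

Definition single (k : 'I_N) (c : bool) (F : R -> R[i]) : Hvec :=
  fun k' c' => if (k' == k) && (c' == c) then F else (fun _ => 0).

Definition id_k : R -> R[i] := fun t => cR t.
Definition one_k : R -> R[i] := fun _ => 1.

Definition m_k (k : 'I_N) (v : Hvec) : Hvec := single k false (fun t => cR t * v k true t).
Definition m_k_adj (k : 'I_N) (v : Hvec) : Hvec := single k true (fun t => cR t * v k false t).

Definition lin_ext (f : seq Hvec -> fock) (x : fock) : fock :=
  flatten [seq [seq (p.1 * q.1, q.2) | q <- f p.2] | p <- x].

Definition opM (k : 'I_N) : fock -> fock := lin_ext (fun u =>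
  match u with [::] => [::] | v :: r => [:: (1, m_k k v :: r)] end).
Definition opMs (k : 'I_N) : fock -> fock := lin_ext (fun u =>
  match u with [::] => [::] | v :: r => [:: (1, m_k_adj k v :: r)] end).
Definition opAs (k : 'I_N) : fock -> fock := lin_ext (fun u =>
  [:: (1, single k false id_k :: u)]).
Definition opDs (k : 'I_N) : fock -> fock := lin_ext (fun u =>
  [:: (1, single k true id_k :: u)]).
Definition opA (k : 'I_N) : fock -> fock := lin_ext (fun u =>
  match u with v :: (_ :: _) as r => [:: (ipH v (single k false id_k), r)] | _ => [::] end).
Definition opD (k : 'I_N) : fock -> fock := lin_ext (fun u =>
  match u with v :: (_ :: _) as r => [:: (ipH v (single k true id_k), r)] | _ => [::] end).

(* eta_k = 1_k (x) e + 1_k (x) f *)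
Definition eta_vec (k : 'I_N) : fock :=
  [:: (1, [:: fun k' (_ : bool) => if k' == k then one_k else (fun _ => 0)])].

(* phi_pi(j), for positions j : 'I_n.+1 (i.e. R = n+1, position j+1) *)
Definition phi {n : nat} (P : {set {set 'I_n.+1}}) (eps : 'I_n.+1 -> bool)
    (iota : 'I_n.+1 -> 'I_N) (j : 'I_n.+1) : fock -> fock :=
  let B := finset.pblock P j in
  let least := [forall i in B, (j <= i)%N] in
  let greatest := [forall i in B, (i <= j)%N] in
  if (j == ord0) || (j == ord_max) then
    (if eps j then opM (iota j) else opMs (iota j))
  else if eps j then
    (if least then opD (iota j) else if greatest then opAs (iota j) else opM (iota j))
  else
    (if least then opA (iota j) else if greatest then opDs (iota j) else opMs (iota j)).

Definition phi_prod {n : nat} (P : {set {set 'I_n.+1}}) (eps : 'I_n.+1 -> bool)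
    (iota : 'I_n.+1 -> 'I_N) (x : fock) : fock :=
  foldr (fun j y => phi P eps iota j y) x (enum 'I_n.+1).

End Fock.

From HB Require Import structures.
From mathcomp Require Import all_boot all_order all_algebra.
From mathcomp Require Import all_classical all_reals all_analysis.
From mathcomp Require Import complex.
Import Order.TTheory GRing.Theory Num.Theory.
Local Open Scope ring_scope.

(* Both sides factor over the blocks of pi.  On the left, multiplicativity of
   kappa_pi and the hypothesis on alternating cumulants give the product over the
   blocks B of the moments int t^|B| dsigma_k, where k is the common value of
   iota on B.  On the right, apply phi_pi(R), phi_pi(R-1), ... to eta_k.  Once
   the positions >= j have been processed, the vector is a single elementary
   tensor with one factor for each block having elements both < j and >= j,
   ordered by the first element >= j of the block (its key).  That factor is
   t^m in H^e or H^f, where m counts the elements >= j of the block and the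
   colour is opposite to eps of the key; the coefficient is the product of the
   moments of the blocks already passed, except the block of 1 and R.  Going
   backwards, the last element of a block creates its factor with A^* or D^*,
   a middle element multiplies it by t and switches its colour with M or M^*,
   and the first element pairs it with id_k using A or D, which produces the
   moment.  Noncrossingness makes the factor of the current block always the
   first one, and the alternation of eps along each block makes the colours
   match.  The block of 1 and R is the last one left; the final pairing with
   eta_k produces its moment. *)

Set Implicit Arguments.
Unset Strict Implicit.
Unset Printing Implicit Defensive.

Lemma cyc_alt_consecutive (s1 s2 : seq bool) (b c : bool) :
  cyc_alt (s1 ++ [:: b, c & s2]) -> b != c.
Proof.
case/andP=> _ /forallP alt.
have lt_s1 : (size s1 < size (s1 ++ [:: b, c & s2]))%N.
  by rewrite size_cat /= addnS ltnS leq_addr.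
have := alt (Ordinal lt_s1); rewrite /= modn_small; last first.
  by rewrite size_cat /= !addnS !ltnS leq_addr.
by rewrite !nth_cat ltnn ltnNge leqnSn /= subnn subSnn.
Qed.

Lemma sorted_consecutive (T : eqType) (r : rel T) (s : seq T) (x y : T) :
  transitive r -> irreflexive r -> sorted r s -> x \in s -> y \in s -> r x y ->
  (forall z, z \in s -> r x z -> ~~ r z y) -> exists s1 s2, s = s1 ++ [:: x, y & s2].
Proof.
move=> r_tr r_irr; rewrite sorted_pairwise // => s_sorted xs; case/splitPr: xs s_sorted => s1 s2.
rewrite pairwise_cat /= => /and3P[/allrelP s1_x _ /andP[/allP x_s2 s2_sorted]] ys rxy between.
have ys2 : y \in s2.
  move: ys; rewrite mem_cat inE => /or3P[ys1 | /eqP yx | //].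
    by have := r_tr _ _ _ (s1_x _ _ ys1 (mem_head _ _)) rxy; rewrite r_irr.
  by move: rxy; rewrite yx r_irr.
case: s2 {s1_x ys} ys2 x_s2 s2_sorted between => [//| z s3]; rewrite inE => /orP[/eqP-> | ys3] x_s2.
  by exists s1, s3.
move=> /andP[/allP z_s3 _] /(_ z); rewrite mem_cat !inE eqxx !orbT x_s2 ?mem_head //.
by move=> /(_ isT isT); rewrite z_s3.
Qed.

Lemma sorted_enum_ord m (A : {pred 'I_m}) : sorted (relpre val ltn) (enum A).
Proof.
rewrite /enum_mem -enumT; apply: sorted_filter; first exact: (relpre_trans ltn_trans).
by rewrite -sorted_map val_enum_ord iota_ltn_sorted.
Qed.

Section Fock.
Variables (R : realType) (N : nat) (sigma : 'I_N -> {measure set R -> \bar R}).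

Definition monomial (m : nat) : R -> R[i] := fun t => cR t ^+ m.

Lemma mul_id_monomial m : (fun t => cR t * monomial m t) = monomial m.+1.
Proof. by apply: boolp.funext => t; rewrite /monomial exprS. Qed.

Lemma monomial0 : monomial 0 = @one_k R.
Proof. by apply: boolp.funext => t; rewrite /monomial expr0. Qed.

Lemma monomial1 : monomial 1 = @id_k R.
Proof. by apply: boolp.funext => t; rewrite /monomial expr1. Qed.

Lemma cint_cR (mu : {measure set R -> \bar R}) (f : R -> R) :
  cint mu (fun t => cR (f t)) = cR (Rintegral mu setT f).
Proof. by rewrite /cint /cR /= Rintegral_cst // mul0r. Qed.

Lemma ipL2_zero_l (mu : {measure set R -> \bar R}) (G : R -> R[i]) :
  ipL2 mu (fun _ => 0) G = 0.
Proof.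
rewrite /ipL2 (_ : (fun t => _) = fun t => cR 0); first by rewrite cint_cR Rintegral_cst // mul0r.
by apply: boolp.funext => t; rewrite mul0r.
Qed.

Lemma cR_conj (t : R) : (cR t)^* = cR t.
Proof. by apply/eqP; rewrite -CrealE /cR complex_real. Qed.

Lemma cR_monomial (t : R) m : monomial m t = cR (t ^+ m).
Proof. by rewrite /monomial /cR !complexr0 -(rmorphXn (real_complex R)). Qed.

Lemma ipL2_monomial_id (mu : {measure set R -> \bar R}) m :
  ipL2 mu (monomial m) (@id_k R) = cR (Rintegral mu setT (fun t => t ^+ m.+1)).
Proof.
rewrite /ipL2 -cint_cR; congr cint; apply: boolp.funext => t.
by rewrite /id_k cR_conj cR_monomial /cR !complexr0 -(rmorphM (real_complex R)) exprSr.
Qed.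

Lemma ipL2_monomial_one (mu : {measure set R -> \bar R}) m :
  ipL2 mu (monomial m) (@one_k R) = cR (Rintegral mu setT (fun t => t ^+ m)).
Proof.
rewrite /ipL2 -cint_cR; congr cint; apply: boolp.funext => t.
by rewrite /one_k conjC1 mulr1 cR_monomial.
Qed.

Lemma ipH_single k c F (w : Hvec R N) :
  ipH sigma (single k c F) w = ipL2 (sigma k) F (w k c).
Proof.
rewrite /ipH (bigD1 k) //= [X in _ + X]big1 => [|k' k'k]; last first.
  by rewrite big_bool /single (negbTE k'k) /= !ipL2_zero_l addr0.
by rewrite big_bool /single eqxx; case: c; rewrite /= ipL2_zero_l ?addr0 ?add0r.
Qed.

Lemma ipF_single (c : R[i]) (v w : Hvec R N) :
  ipF sigma [:: (c, [:: v])] [:: (1, [:: w])] = c * ipH sigma v w.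
Proof. by rewrite /ipF /ipT !big_seq1 /= conjC1 mulr1. Qed.

Lemma single_self (k : 'I_N) c (F : R -> R[i]) : single k c F k c = F.
Proof. by rewrite /single !eqxx. Qed.

Lemma opM_eps_cons (k : 'I_N) (b : bool) c (v : Hvec R N) r :
  (if b then opM k else opMs k) [:: (c, v :: r)]
  = [:: (c, single k (~~ b) (fun t => cR t * v k b t) :: r)].
Proof. by case: b; rewrite /opM /opMs /lin_ext /= mulr1. Qed.

Lemma opD_eps_cons (k : 'I_N) (b : bool) c (v x : Hvec R N) r :
  (if b then opD sigma k else opA sigma k) [:: (c, [:: v, x & r])]
  = [:: (c * ipH sigma v (single k b (@id_k R)), x :: r)].
Proof. by case: b. Qed.

Lemma opAs_eps_cons (k : 'I_N) (b : bool) c (r : seq (Hvec R N)) :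
  (if b then opAs k else opDs k) [:: (c, r)] = [:: (c, single k (~~ b) (@id_k R) :: r)].
Proof. by case: b; rewrite /opAs /opDs /lin_ext /= mulr1. Qed.

End Fock.

Section FockComputation.
Variables (R : realType) (N : nat) (sigma : 'I_N -> {measure set R -> \bar R}).
Variables (n : nat) (eps : 'I_n.+1 -> bool) (iota : 'I_n.+1 -> 'I_N).
Variable P : {set {set 'I_n.+1}}.
Hypothesis P_NC : is_NC P.
Hypothesis P_irr : finset.pblock P ord0 = finset.pblock P ord_max.
Hypothesis iota_blocks : forall B, B \in P -> {in B &, forall i j, iota i = iota j}.
Hypothesis eps_blocks : forall B, B \in P -> cyc_alt [seq eps i | i <- enum B].

Local Notation block := (finset.pblock P).
Local Notation phi_at := (phi sigma P eps iota).
Local Notation lt_pos := (relpre (@nat_of_ord n.+1) ltn).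

Lemma lt_pos_trans : transitive lt_pos. Proof. exact: relpre_trans ltn_trans. Qed.
Lemma lt_pos_irr : irreflexive lt_pos. Proof. by move=> x; rewrite /= ltnn. Qed.

Lemma P_partition : finset.partition P [set: 'I_n.+1].
Proof. by case/andP: P_NC. Qed.

Lemma block_in x : block x \in P.
Proof. by apply: pblock_mem; rewrite (cover_partition P_partition) inE. Qed.

Lemma mem_block x : x \in block x.
Proof. by rewrite mem_pblock (cover_partition P_partition) inE. Qed.

Lemma block_of B x : B \in P -> x \in B -> block x = B.
Proof. by apply: def_pblock; case/and3P: P_partition. Qed.

Lemma block_eq x y : x \in block y -> block x = block y.
Proof. exact: block_of (block_in y). Qed.

Lemma mem_block_sym x y : (x \in block y) = (y \in block x).
Proof. by apply/idP/idP => /block_eq ->; exact: mem_block. Qed.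

Lemma notin_block B x : B \in P -> B != block x -> x \notin B.
Proof. by move=> BP; apply: contraNN => xB; rewrite (block_of BP xB). Qed.

Lemma block_noncrossing (a b c d : 'I_n.+1) : (a < b < c)%N -> (c < d)%N ->
  c \in block a -> d \in block b -> block a = block b.
Proof.
move=> /andP[ab bc] cd ca db; apply/eqP/negPn/negP => ab_neq.
case/andP: P_NC => _ /forall_inP/(_ _ (block_in a))/forall_inP/(_ _ (block_in b)).
move=> /implyP/(_ ab_neq)/negP; apply; apply/existsP; exists a; apply/existsP; exists b.
by apply/existsP; exists c; apply/existsP; exists d; rewrite ab bc cd !mem_block ca db.
Qed.

Lemma block_nontrivial x : exists2 y, y \in block x & y != x.
Proof.
have [/exists_inP[y] | ] := boolP [exists y in block x, y != x]; first by exists y.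
rewrite negb_exists_in => /forall_inP single_x.
have Bx : block x = [set x].
  by apply/setP => y; rewrite inE; apply/idP/eqP => [/single_x/negPn/eqP | ->] //; exact: mem_block.
have := eps_blocks (block_in x); rewrite Bx enum_set1 /cyc_alt => /andP[_ /forallP/(_ ord0)].
by rewrite eqxx.
Qed.

Lemma n_gt0 : (0 < n)%N.
Proof.
have [y _] := block_nontrivial ord0; apply: contraNT; rewrite -eqn0Ngt => /eqP n0.
have : (y <= 0)%N by rewrite -n0 -ltnS.
by rewrite leqn0 => /eqP y0; apply/eqP/val_inj.
Qed.

Definition next_in_block (x y : 'I_n.+1) : Prop :=
  [/\ y \in block x, (x < y)%N & forall z, z \in block x -> (x < z)%N -> (y <= z)%N].

Lemma eps_next x y : next_in_block x y -> eps x != eps y.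
Proof.
case=> yB xy y_next.
have [s1 [s2 def_s]] : exists s1 s2, enum (block x) = s1 ++ [:: x, y & s2].
  apply: sorted_consecutive lt_pos_trans lt_pos_irr (sorted_enum_ord _) _ _ xy _;
    rewrite ?mem_enum ?mem_block // => z; rewrite mem_enum => zB xz.
  by rewrite /= -leqNgt y_next.
by have := eps_blocks (block_in x); rewrite def_s map_cat; apply: cyc_alt_consecutive.
Qed.

Lemma leq_neq (i y : 'I_n.+1) : y != i -> (i <= y)%N = (i < y)%N.
Proof. by move=> yi; rewrite leq_eqVlt (inj_eq val_inj) eq_sym (negbTE yi). Qed.

Definition tail_from (j : nat) (B : {set 'I_n.+1}) := [set x in B | j <= x]%N.
Definition above (j : nat) (B : {set 'I_n.+1}) := [forall x in B, j <= x]%N.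
Definition below (j : nat) (B : {set 'I_n.+1}) := [forall x in B, x <= j]%N.

Lemma not_above j (B : {set 'I_n.+1}) : ~~ above j B = [exists a in B, a < j]%N.
Proof. by rewrite negb_forall_in; apply: eq_existsb => a; rewrite ltnNge. Qed.

Lemma tail_from_above j (B : {set 'I_n.+1}) : above j B -> tail_from j B = B.
Proof. by move=> /forall_inP B_above; apply/setP => x; rewrite inE andb_idr //; exact: B_above. Qed.

Lemma tail_from_below (i : 'I_n.+1) : below i (block i) -> tail_from i (block i) = [set i].
Proof.
move=> i_last; apply/setP => y; rewrite !inE; apply/andP/eqP => [[yB iy] | ->].
  by apply/val_inj/eqP; rewrite eqn_leq iy (forall_inP i_last).
by rewrite mem_block leqnn.
Qed.

Lemma tail_from_notin (i : 'I_n.+1) (B : {set 'I_n.+1}) :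
  i \notin B -> tail_from i B = tail_from i.+1 B.
Proof.
move=> iB; apply/setP => y; rewrite !inE; case yB: (y \in B) => //=.
by apply: leq_neq; apply: contraNneq iB => <-.
Qed.

Lemma above_notin (i : 'I_n.+1) (B : {set 'I_n.+1}) : i \notin B -> above i B = above i.+1 B.
Proof.
move=> iB; apply: eq_forallb => y; case yB: (y \in B) => //=.
by rewrite leq_neq //; apply: contraNneq iB => <-.
Qed.

Lemma card_tail_from_in (i : 'I_n.+1) (B : {set 'I_n.+1}) :
  i \in B -> #|tail_from i B| = #|tail_from i.+1 B|.+1.
Proof.
move=> iB; rewrite (_ : tail_from i B = i |: tail_from i.+1 B).
  by rewrite cardsU1 !inE ltnn andbF.
apply/setP => y; rewrite !inE; case: (eqVneq y i) => [-> | yi] /=; first by rewrite iB leqnn.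
by rewrite leq_neq.
Qed.

Lemma above_succ_block (i : 'I_n.+1) : above i.+1 (block i) = false.
Proof. by apply/negbTE; rewrite not_above; apply/exists_inP; exists i; rewrite ?mem_block. Qed.

Definition is_key (j : nat) (x : 'I_n.+1) :=
  [&& j <= x, [forall y in tail_from j (block x), x <= y] & ~~ above j (block x)]%N.

Definition keys (j : nat) := enum (is_key j).

Lemma mem_keys j x : (x \in keys j) = is_key j x.
Proof. exact: mem_enum. Qed.

Lemma sorted_keys j : sorted lt_pos (keys j).
Proof. exact: sorted_enum_ord. Qed.

Lemma keysE j s : sorted lt_pos s -> (forall x, (x \in s) = is_key j x) -> keys j = s.
Proof.
move=> s_sorted mem_s; have := irr_sorted_eq lt_pos_trans lt_pos_irr (sorted_keys j) s_sorted.
by apply=> x; rewrite mem_keys mem_s.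
Qed.

Lemma exists_next (B : {set 'I_n.+1}) (j : nat) (b : 'I_n.+1) : b \in B -> (j <= b)%N ->
  exists y, [/\ y \in B, (j <= y)%N & forall z, z \in B -> (j <= z)%N -> (y <= z)%N].
Proof.
move=> bB jb; have : b \in tail_from j B by rewrite inE bB jb.
case/(arg_minnP val) => y yT y_min.
have /[!inE] /andP[yB jy] : y \in tail_from j B := yT.
exists y; split=> // z zB jz; have zT : z \in tail_from j B by rewrite inE zB jz.
exact: y_min zT.
Qed.

Lemma is_key_notin (i x : 'I_n.+1) : x \notin block i -> is_key i x = is_key i.+1 x.
Proof.
move=> xBi; have iBx : i \notin block x by rewrite -mem_block_sym.
have xi : x != i by apply: contraNneq xBi => ->; exact: mem_block.
rewrite /is_key leq_neq // tail_from_notin // above_notin //.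
Qed.

Lemma is_key_in_block (i x : 'I_n.+1) :
  x \in block i -> is_key i x = (x == i) && ~~ above i (block i).
Proof.
move=> xB; rewrite /is_key (block_eq xB); case: (eqVneq x i) => [-> | xi] /=.
  rewrite leqnn (_ : [forall y in _, _] = true) //.
  by apply/forall_inP => y; rewrite inE => /andP[].
apply/negbTE/and3P => -[ix /forall_inP/(_ i) xi_le _]; move/eqP: xi; apply.
by apply/val_inj/eqP; rewrite eqn_leq xi_le // inE mem_block leqnn.
Qed.

Definition other_keys (i : 'I_n.+1) := [seq x <- keys i.+1 | x \notin block i].

Lemma sorted_other_keys i : sorted lt_pos (other_keys i).
Proof. by apply: sorted_filter; [exact: lt_pos_trans | exact: sorted_keys]. Qed.

Lemma mem_other_keys i x : (x \in other_keys i) = (x \notin block i) && is_key i x.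
Proof.
rewrite mem_filter mem_keys; case: (boolP (x \in block i)) => //= xB.
by rewrite is_key_notin.
Qed.

Lemma other_keys_gt i x : x \in other_keys i -> (i < x)%N.
Proof. by rewrite mem_filter mem_keys => /andP[_ /and3P[]]. Qed.

Lemma keys_open (i : 'I_n.+1) : ~~ above i (block i) -> keys i = i :: other_keys i.
Proof.
move=> i_open; apply: keysE => [|x].
  rewrite /= path_sortedE ?sorted_other_keys ?andbT; last exact: lt_pos_trans.
  by apply/allP => x /other_keys_gt.
rewrite inE mem_other_keys; case: (boolP (x \in block i)) => [xB | xB] /=.
  by rewrite is_key_in_block // i_open andbT orbF.
by rewrite (_ : x == i = false) //; apply: contraNF xB => /eqP ->; exact: mem_block.
Qed.

Lemma keys_closed (i : 'I_n.+1) : above i (block i) -> keys i = other_keys i.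
Proof.
move=> i_closed; apply: keysE => [|x]; first exact: sorted_other_keys.
rewrite mem_other_keys; case: (boolP (x \in block i)) => //= xB.
by rewrite is_key_in_block // i_closed andbF.
Qed.

Lemma keys_last (i : 'I_n.+1) : below i (block i) -> keys i.+1 = other_keys i.
Proof.
move=> i_last; apply/esym/all_filterP/allP => x; rewrite mem_keys => /and3P[ix _ _].
by apply: contraTN ix => /(forall_inP i_last); rewrite -leqNgt.
Qed.

Lemma keys_next i y : next_in_block i y -> keys i.+1 = y :: other_keys i.
Proof.
case=> yB iy y_next; apply: keysE => [|x].
  rewrite /= path_sortedE ?sorted_other_keys ?andbT; last exact: lt_pos_trans.
  apply/allP => x xO; have ix := other_keys_gt xO.
  move: xO; rewrite mem_other_keys /is_key not_above => /andP[xB /and3P[_ _ /exists_inP[a aB ai]]].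
  rewrite /= ltnNge leq_eqVlt negb_or.
  have -> /= : (x != y :> nat) by apply: contraNneq xB => /val_inj ->.
  apply: contraNN xB => xy.
  have ai_block : block a = block i.
    by apply: (@block_noncrossing a i x y); rewrite ?ai ?ix ?xy // mem_block_sym.
  by rewrite -ai_block mem_block_sym.
rewrite inE mem_other_keys; case: (boolP (x \in block i)) => xB /=; last first.
  have -> : (x == y) = false by apply: contraNF xB => /eqP ->.
  exact: is_key_notin.
rewrite orbF /is_key (block_eq xB) above_succ_block andbT.
apply/eqP/andP => [-> | [ix /forall_inP x_min]]; first split => //.
  by apply/forall_inP => z; rewrite inE => /andP[]; exact: y_next.
by apply/val_inj/eqP; rewrite eqn_leq y_next //= x_min // inE yB.
Qed.

Definition block_index (B : {set 'I_n.+1}) := iota (odflt ord0 [pick x in B]).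

Definition moment (B : {set 'I_n.+1}) : R[i] :=
  cR (Rintegral (sigma (block_index B)) setT (fun t => t ^+ #|B|)).

Definition coef (j : nat) := \prod_(B in P | (B != block ord0) && above j B) moment B.

Definition vec (j : nat) (x : 'I_n.+1) : Hvec R N :=
  single (iota x) (~~ eps x) (monomial #|tail_from j (block x)|).

(* The tensor of the proof idea once the positions >= j (counted from 0) are processed. *)
Definition state (j : nat) : fock R N := [:: (coef j, [seq vec j x | x <- keys j])].

Lemma block_index_mem B x : B \in P -> x \in B -> block_index B = iota x.
Proof.
move=> BP xB; rewrite /block_index; case: pickP => [y yB | /(_ x)]; last by rewrite xB.
exact: (iota_blocks BP yB xB).
Qed.

Lemma coef_open (i : 'I_n.+1) : ~~ above i (block i) -> coef i = coef i.+1.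
Proof.
move=> i_open; apply: eq_bigl => B; case BP: (B \in P) => //=.
case: (eqVneq B (block i)) => [-> | B_i]; first by rewrite (negbTE i_open) above_succ_block !andbF.
by rewrite above_notin // notin_block.
Qed.

Lemma coef_close (i : 'I_n.+1) : (0 < i)%N -> above i (block i) ->
  coef i = moment (block i) * coef i.+1.
Proof.
move=> i_gt0 i_closed; rewrite /coef (bigD1 (block i)) /=; last first.
  rewrite block_in i_closed andbT; apply: contraTneq i_gt0 => i_0.
  by move/forall_inP: i_closed => /(_ ord0); rewrite i_0 mem_block leqn0 -eqn0Ngt => /(_ isT).
congr (_ * _); apply: eq_bigl => B; case BP: (B \in P) => //=.
case: (eqVneq B (block i)) => [-> | B_i]; first by rewrite above_succ_block !andbF.
by rewrite andbT above_notin // notin_block.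
Qed.

Lemma vec_notin (i x : 'I_n.+1) : x \notin block i -> vec i x = vec i.+1 x.
Proof. by move=> xB; rewrite /vec tail_from_notin // -mem_block_sym. Qed.

Lemma map_vec_other_keys (i : 'I_n.+1) :
  [seq vec i.+1 x | x <- other_keys i] = [seq vec i x | x <- other_keys i].
Proof.
by apply/eq_in_map => x; rewrite mem_other_keys => /andP[xB _]; rewrite vec_notin.
Qed.

Lemma exists_next_in_block (i : 'I_n.+1) : ~~ below i (block i) -> exists y, next_in_block i y.
Proof.
rewrite negb_forall_in => /exists_inP[b bB]; rewrite -ltnNge => ib.
exact: exists_next bB ib.
Qed.

Lemma exists_key j : (0 < j <= n)%N -> exists x, is_key j x.
Proof.
case/andP=> j_gt0 j_le; have max_B0 : ord_max \in block ord0 by rewrite P_irr mem_block.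
have [x [xB jx x_min]] := exists_next max_B0 j_le.
exists x; rewrite /is_key jx (block_eq xB) not_above /=; apply/andP; split.
  by apply/forall_inP => z; rewrite inE => /andP[]; exact: x_min.
by apply/exists_inP; exists ord0; rewrite ?mem_block.
Qed.

Lemma phi_end (j : 'I_n.+1) : (j == ord0) || (j == ord_max) ->
  phi_at j = if eps j then opM (iota j) else opMs (iota j).
Proof. by rewrite /phi => ->. Qed.

Lemma phi_interior (i : 'I_n.+1) : (0 < i < n)%N ->
  phi_at i =
    if above i (block i) then (if eps i then opD sigma (iota i) else opA sigma (iota i))
    else if below i (block i) then (if eps i then opAs (iota i) else opDs (iota i))
    else if eps i then opM (iota i) else opMs (iota i).
Proof.
case/andP=> i_gt0 i_lt; rewrite /phi (_ : (i == ord0) || (i == ord_max) = false) /=.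
  by case: (eps i).
by apply/norP; split; rewrite -val_eqE /= neq_ltn ?i_gt0 ?i_lt ?orbT.
Qed.

Lemma vec_next (i y : 'I_n.+1) : y \in block i -> eps y != eps i ->
  vec i.+1 y = single (iota i) (eps i) (monomial #|tail_from i.+1 (block i)|).
Proof.
move=> yB eps_yi; rewrite /vec (block_eq yB) (iota_blocks (block_in i) yB (mem_block i)).
by congr single; move: eps_yi; case: (eps y); case: (eps i).
Qed.

Lemma phi_mult (i y : 'I_n.+1) c r : y \in block i -> eps y != eps i ->
  (if eps i then opM (iota i) else opMs (iota i)) [:: (c, vec i.+1 y :: r)]
  = [:: (c, vec i i :: r)].
Proof.
move=> yB eps_yi; rewrite opM_eps_cons (vec_next yB eps_yi) single_self mul_id_monomial.
by rewrite -card_tail_from_in ?mem_block.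
Qed.

Lemma phi_close (i y : 'I_n.+1) c x r : y \in block i -> eps y != eps i -> above i (block i) ->
  (if eps i then opD sigma (iota i) else opA sigma (iota i)) [:: (c, [:: vec i.+1 y, x & r])]
  = [:: (c * moment (block i), x :: r)].
Proof.
move=> yB eps_yi i_closed; rewrite opD_eps_cons (vec_next yB eps_yi) ipH_single single_self.
rewrite ipL2_monomial_id -card_tail_from_in ?mem_block // tail_from_above //.
by rewrite /moment (block_index_mem (block_in i) (mem_block i)).
Qed.

Lemma phi_open (i : 'I_n.+1) c r : below i (block i) ->
  (if eps i then opAs (iota i) else opDs (iota i)) [:: (c, r)] = [:: (c, vec i i :: r)].
Proof. by move=> i_last; rewrite opAs_eps_cons /vec tail_from_below // cards1 monomial1. Qed.

Lemma phi_state (i : 'I_n.+1) : (0 < i < n)%N -> phi_at i (state i.+1) = state i.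
Proof.
move=> i_int; have /andP[i_gt0 i_lt] := i_int; rewrite phi_interior //.
have [i_closed | i_open] := boolP (above i (block i)); last first.
  rewrite /state (coef_open i_open) (keys_open i_open).
  have [i_last | i_mid] := boolP (below i (block i)).
    by rewrite (keys_last i_last) phi_open // map_vec_other_keys.
  have [y y_next] := exists_next_in_block i_mid; have [yB _ _] := y_next.
  have eps_yi : eps y != eps i by rewrite eq_sym eps_next.
  by rewrite (keys_next y_next) /= phi_mult // map_vec_other_keys.
have [i_last | i_mid] := boolP (below i (block i)).
  have [y yB /eqP[]] := block_nontrivial i.
  by apply/val_inj/eqP; rewrite eqn_leq (forall_inP i_last) ?(forall_inP i_closed).
have [y y_next] := exists_next_in_block i_mid; have [yB _ _] := y_next.
have eps_yi : eps y != eps i by rewrite eq_sym eps_next.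
have [x [r others_i]] : exists x r, other_keys i = x :: r.
  have [|x x_key] := @exists_key i; first by rewrite i_gt0 ltnW.
  have : x \in other_keys i by rewrite -(keys_closed i_closed) mem_keys.
  by case: (other_keys i) => // x' r _; exists x', r.
rewrite /state (keys_next y_next) (keys_closed i_closed) /= map_vec_other_keys others_i /=.
by rewrite phi_close // (coef_close i_gt0 i_closed) mulrC.
Qed.

Lemma phi_last_eta k : iota ord_max = k -> phi_at ord_max (eta_vec R k) = state n.
Proof.
move=> iota_max.
have max_open : ~~ above (@ord_max n) (block ord_max).
  by rewrite not_above; apply/exists_inP; exists ord0; rewrite -?P_irr ?mem_block ?n_gt0.
have keys_beyond : keys n.+1 = [::] by apply: keysE => // x; rewrite /is_key leqNgt ltn_ord.
have coef_n : coef n = 1.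
  apply: big1 => B /andP[BP /andP[B_0 B_above]].
  have [x xB] : exists x, x \in B.
    by apply/set0Pn; case/and3P: P_partition => _ _; apply: contraNneq => <-.
  have x_max : x = ord_max by apply/val_inj/eqP; rewrite eqn_leq leq_ord (forall_inP B_above).
  by case/eqP: B_0; rewrite P_irr -x_max (block_of BP xB).
rewrite phi_end ?eqxx ?orbT // /state coef_n (keys_open max_open) /other_keys keys_beyond /=.
rewrite opM_eps_cons /vec iota_max eqxx -monomial0 mul_id_monomial.
rewrite (tail_from_below (i := ord_max)) ?cards1 //.
by apply/forall_inP => x _; exact: leq_ord.
Qed.

Lemma pairing_phi_first k : iota ord0 = k ->
  ipF sigma (phi_at ord0 (state 1)) (eta_vec R k) = \prod_(B in P) moment B.
Proof.
move=> iota0; have max_B0 : ord_max \in block ord0 by rewrite P_irr mem_block.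
have [y y_next] : exists y, next_in_block ord0 y := exists_next max_B0 n_gt0.
have [yB _ _] := y_next; have eps_y0 : eps y != eps ord0 by rewrite eq_sym eps_next.
have others0 : other_keys ord0 = [::].
  rewrite /other_keys (eq_in_filter (a2 := pred0)) ?filter_pred0 // => x.
  rewrite mem_keys /is_key not_above => /and3P[_ _ /exists_inP[a aB]].
  rewrite ltnS leqn0 => /eqP a0; have a_0 : a = ord0 by apply/val_inj.
  by apply/negbTE; rewrite negbK mem_block_sym -a_0.
have coef1 : coef 1 = \prod_(B in P | B != block ord0) moment B.
  apply: eq_bigl => B; case BP: (B \in P) => //=; case: (eqVneq B (block ord0)) => //= B_0.
  apply/forall_inP => x xB; rewrite lt0n; apply: contraNneq B_0 => x0.
  by rewrite -(block_of BP xB) (_ : x = ord0) //; apply/val_inj.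
rewrite /state (keys_next y_next) others0 phi_end ?eqxx //= phi_mult //.
rewrite /eta_vec ipF_single /vec ipH_single /= iota0 eqxx ipL2_monomial_one.
rewrite tail_from_above; last by apply/forall_inP.
rewrite (bigD1 (block ord0)) ?block_in //= coef1 mulrC /moment.
by rewrite (block_index_mem (block_in ord0) (mem_block ord0)) iota0.
Qed.

Lemma drop_enum_ord j : (j <= n)%N ->
  drop j (enum 'I_n.+1) = inord j :: drop j.+1 (enum 'I_n.+1).
Proof.
move=> j_le; rewrite (drop_nth ord0) ?size_enum_ord ?ltnS //; congr (_ :: _).
by apply: val_inj; rewrite /= nth_enum_ord ?inordK ?ltnS.
Qed.

Lemma phi_suffix k j : iota ord_max = k -> (0 < j <= n)%N ->
  foldr (fun x y => phi_at x y) (eta_vec R k) (drop j (enum 'I_n.+1)) = state j.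
Proof.
move=> iota_max /andP[j_gt0 j_le].
have [d def_n] : exists d, (d + j)%N = n by exists (n - j)%N; rewrite subnK.
elim: d j j_gt0 {j_le} def_n => [|d IH] j j_gt0 def_n.
  rewrite add0n in def_n; rewrite def_n drop_enum_ord // drop_oversize ?size_enum_ord //.
  rewrite (_ : inord n = ord_max :> 'I_n.+1) -?(phi_last_eta iota_max) //.
  by apply: val_inj; rewrite /= inordK.
have j_lt : (j < n)%N by rewrite -def_n addSn ltnS leq_addl.
have j_ord : (j < n.+1)%N by rewrite ltnS ltnW.
have := @phi_state (inord j); rewrite (inordK j_ord) j_gt0 j_lt => /(_ isT) <-.
have IHj := IH j.+1 isT; rewrite -IHj; last by rewrite -addSnnS.
rewrite drop_enum_ord; last exact: ltnW.
by rewrite [LHS]/=.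
Qed.

Lemma pairing_phi_prod k : iota ord0 = k ->
  ipF sigma (phi_prod sigma P eps iota (eta_vec R k)) (eta_vec R k) = \prod_(B in P) moment B.
Proof.
move=> iota0; have iota_max : iota ord_max = k.
  rewrite -iota0; apply: (iota_blocks (block_in ord0)); rewrite ?mem_block //.
  by rewrite P_irr mem_block.
have -> : phi_prod sigma P eps iota (eta_vec R k) = phi_at ord0 (state 1).
  rewrite -(phi_suffix (j := 1) iota_max n_gt0) /phi_prod enum_ordSl.
  by rewrite [LHS]/= drop1.
exact: pairing_phi_first.
Qed.

End FockComputation.

(* R in the paper is n.+1 here; positions 1..R are ord0..ord_max : 'I_n.+1;
   eps j = true means epsilon(j) = 1, eps j = false means epsilon(j) = *. *)
Theorem lemma4p2 (Rr : realType) (A : lalgType Rr[i]) (st : A -> A) (tau : A -> Rr[i])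
    (N : nat) (X : 'I_N -> A) (sigma : 'I_N -> {finite_measure set Rr -> \bar Rr})
    (Hst : is_star st) (Htau : is_faithful_tracial_state st tau)
    (Hfree : star_free st tau X) (HRd : forall k, R_diagonal st tau (X k))
    (Hsym : forall k, symmetric_measure (sigma k))
    (Hcpt : forall k, compact_support (sigma k))
    (Hcum : forall (k : 'I_N) (s : seq bool), cyc_alt s ->
       kappa tau [seq xpow st (X k) b | b <- s]
       = cR (Rintegral (sigma k) setT (fun t => t ^+ size s)))
    (n : nat) (eps : 'I_n.+1 -> bool) (iota : 'I_n.+1 -> 'I_N) (k : 'I_N)
    (Hi1 : iota ord0 = k) (HiR : iota ord_max = k)
    (P : {set {set 'I_n.+1}}) (HNC : is_NC P)
    (Hirr : finset.pblock P ord0 = finset.pblock P ord_max)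
    (Hblocks : forall B, B \in P ->
       (forall i j, i \in B -> j \in B -> iota i = iota j) /\
       cyc_alt [seq eps i | i <- enum B]) :
  kappa_pi tau P (fun j => xpow st (X (iota j)) (eps j))
  = ipF sigma (phi_prod sigma P eps iota (@eta_vec Rr N k)) (@eta_vec Rr N k).
Proof.
have iota_blocks B : B \in P -> {in B &, forall i j, iota i = iota j} by case/Hblocks.
have eps_blocks B : B \in P -> cyc_alt [seq eps i | i <- enum B] by case/Hblocks.
pose sigma' k : {measure set Rr -> \bar Rr} := sigma k.
rewrite (pairing_phi_prod sigma' HNC Hirr iota_blocks eps_blocks Hi1).
apply: eq_bigr => B BP; rewrite /moment cardE -(size_map eps) -Hcum; last exact: eps_blocks.
congr kappa; rewrite -map_comp; apply/eq_in_map => i; rewrite mem_enum => iB /=.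
by rewrite (block_index_mem iota_blocks BP iB).
Qed.
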